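(* Let $\Delta_1$ and $\Delta_2$ be non-trivial finitely generated groups. Then the free product $\Delta_1\star\Delta_2$ is presentable by a product if and only if $\Delta_1\cong\mathbb{Z}/2\cong\Delta_2$.
   Context: An infinite group $\Gamma$ is presentable by a product if there exist groups $\Gamma_1,\Gamma_2$ and a homomorphism $\varphi\colon\Gamma_1\times\Gamma_2\to\Gamma$ whose image has finite index in $\Gamma$ and such that both $\varphi(\Gamma_1)$ and $\varphi(\Gamma_2)$ are infinite. *)

From Stdlib Require Import List.
Import ListNotations.

Record group := Group {
  carrier :> Type;
  gmul : carrier -> carrier -> carrier;
  gone : carrier;
  ginv : carrier -> carrier;
  gmulA : forall x y z, gmul x (gmul y z) = gmul (gmul x y) z;
  gmul1l : forall x, gmul gone x = x;
  gmul1r : forall x, gmul x gone = x;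
  gmulVl : forall x, gmul (ginv x) x = gone;
  gmulVr : forall x, gmul x (ginv x) = gone
}.
Arguments gmul {g}.
Arguments gone {g}.
Arguments ginv {g}.

Definition is_hom (G H : group) (f : G -> H) : Prop :=
  forall x y, f (gmul x y) = gmul (f x) (f y).

Definition isomorphic (G H : group) : Prop :=
  exists (f : G -> H) (g : H -> G),
    is_hom G H f /\ is_hom H G g /\
    (forall x, g (f x) = x) /\ (forall y, f (g y) = y).

Definition finite_set {T : Type} (A : T -> Prop) : Prop :=
  exists l : list T, forall x, A x -> In x l.

Definition is_subgroup (G : group) (H : G -> Prop) : Prop :=
  H gone /\ (forall x y, H x -> H y -> H (gmul x y)) /\
  (forall x, H x -> H (ginv x)).

Definition image {G H : group} (f : G -> H) : H -> Prop :=
  fun y => exists x, f x = y.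

Definition finite_index (G : group) (H : G -> Prop) : Prop :=
  exists l : list (carrier G),
    forall x : G, exists g h, In g l /\ H h /\ x = gmul g h.

Definition infinite_group (G : group) : Prop :=
  ~ finite_set (fun _ : G => True).

Definition nontrivial (G : group) : Prop := exists x : G, x <> gone.

Definition generated (G : group) (l : list (carrier G)) (x : G) : Prop :=
  forall H : G -> Prop, is_subgroup G H -> (forall y, In y l -> H y) -> H x.

Definition finitely_generated (G : group) : Prop :=
  exists l : list (carrier G), forall x, generated G l x.

Definition prod_group (G1 G2 : group) : group.
Proof.
  refine (@Group (G1 * G2)%type
    (fun x y => (gmul (fst x) (fst y), gmul (snd x) (snd y)))
    (gone, gone)
    (fun x => (ginv (fst x), ginv (snd x))) _ _ _ _ _).
  - intros [a b] [c d] [e f]; simpl; now rewrite !gmulA.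
  - intros [a b]; simpl; now rewrite !gmul1l.
  - intros [a b]; simpl; now rewrite !gmul1r.
  - intros [a b]; simpl; now rewrite !gmulVl.
  - intros [a b]; simpl; now rewrite !gmulVr.
Defined.

Definition presentable_by_product (Gam : group) : Prop :=
  infinite_group Gam /\
  exists (G1 G2 : group) (phi : prod_group G1 G2 -> Gam),
    is_hom (prod_group G1 G2) Gam phi /\
    finite_index Gam (image phi) /\
    ~ finite_set (image (fun a : G1 => phi (a, gone))) /\
    ~ finite_set (image (fun b : G2 => phi (gone, b))).

Definition is_free_product (D1 D2 G : group) (i1 : D1 -> G) (i2 : D2 -> G)
  : Prop :=
  is_hom D1 G i1 /\ is_hom D2 G i2 /\
  forall (H : group) (f1 : D1 -> H) (f2 : D2 -> H),
    is_hom D1 H f1 -> is_hom D2 H f2 ->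
    exists f : G -> H,
      is_hom G H f /\ (forall x, f (i1 x) = f1 x) /\ (forall y, f (i2 y) = f2 y) /\
      forall f' : G -> H,
        is_hom G H f' -> (forall x, f' (i1 x) = f1 x) ->
        (forall y, f' (i2 y) = f2 y) -> forall z, f' z = f z.

Definition Z2 : group.
Proof.
  refine (@Group bool xorb false (fun b => b) _ _ _ _ _).
  - intros [] [] []; reflexivity.
  - intros []; reflexivity.
  - intros []; reflexivity.
  - intros []; reflexivity.
  - intros []; reflexivity.
Defined.

(* Let A and B be the images of the two factors of a presentation of the free product
   D1 * D2 by a product. They commute elementwise, are infinite, and every element has a
   positive power in AB. Reduced words (normal forms, obtained through van der Waerden's action)
   show that a nontrivial element of A is conjugate either into a factor or to a cyclically
   reduced word h of length at least two. In the first case, since the centralizer of a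
   conjugate c d c^-1 of a factor element is the conjugate c D_i c^-1, A and B and then a power
   of c (x y) c^-1, with x, y nontrivial in D1, D2, all land in c D_i c^-1, which is impossible
   for the alternating word (x y)^k. In the second case the centralizer of h is abelian, because
   words commuting with a common nonempty word commute with each other; so B is abelian, and
   symmetrically A is. Then powers of x y and x' y commute, which forces x = x': each factor has
   exactly one nontrivial element, i.e. is Z/2. Conversely, in Z/2 * Z/2 the element u = x y has
   infinite order and generates a subgroup of index two, so (m, n) |-> u^(m+n) presents the group
   by Z x Z. *)

From Stdlib Require Import List Arith Lia ZArith Bool.
From Stdlib Require Import Classical ClassicalEpsilon FunctionalExtensionality ProofIrrelevance.
Import ListNotations.

Notation emi := excluded_middle_informative.

Section GroupBasics.
Context {G : group}.
Implicit Types a x y c : G.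

Lemma mul_cancel_l a x y : gmul a x = gmul a y -> x = y.
Proof.
  intro E. rewrite <- (gmul1l G x), <- (gmul1l G y), <- (gmulVl G a), <- !gmulA, E.
  reflexivity.
Qed.

Lemma mul_cancel_r a x y : gmul x a = gmul y a -> x = y.
Proof.
  intro E. rewrite <- (gmul1r G x), <- (gmul1r G y), <- (gmulVr G a), !gmulA, E.
  reflexivity.
Qed.

Lemma mulKg x y : gmul (ginv x) (gmul x y) = y.
Proof. now rewrite gmulA, gmulVl, gmul1l. Qed.

Lemma mulKVg x y : gmul x (gmul (ginv x) y) = y.
Proof. now rewrite gmulA, gmulVr, gmul1l. Qed.

Lemma mul_eq1_r x y : gmul x y = gone -> y = ginv x.
Proof. intro E. apply (mul_cancel_l x). now rewrite E, gmulVr. Qed.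

Lemma invgK x : ginv (ginv x) = x.
Proof. symmetry. apply mul_eq1_r, gmulVl. Qed.

Lemma invMg x y : ginv (gmul x y) = gmul (ginv y) (ginv x).
Proof. symmetry. apply mul_eq1_r. now rewrite <- gmulA, mulKVg, gmulVr. Qed.

Lemma invg1 : ginv (@gone G) = gone.
Proof. symmetry. apply mul_eq1_r, gmul1l. Qed.

Lemma invg_eq1 x : ginv x = gone -> x = gone.
Proof. intro E. now rewrite <- (invgK x), E, invg1. Qed.

Definition conjg c x : G := gmul c (gmul x (ginv c)).

Definition commute x y : Prop := gmul x y = gmul y x.

Fixpoint gpow x (n : nat) : G :=
  match n with 0 => gone | S n => gmul x (gpow x n) end.
End GroupBasics.

Ltac gsimpl := repeat progress (unfold conjg in *; rewrite <- ?gmulA;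
  rewrite ?mulKg, ?mulKVg, ?gmulVr, ?gmulVl, ?gmul1l, ?gmul1r, ?invg1).

Section GroupCalculus.
Context {G : group}.
Implicit Types x y z c d : G.

Lemma conjgK c x : conjg (ginv c) (conjg c x) = x.
Proof. unfold conjg. rewrite invgK. gsimpl. reflexivity. Qed.

Lemma conjg_by1 x : conjg gone x = x.
Proof. now gsimpl. Qed.

Lemma conjg1 c : conjg c gone = gone.
Proof. now gsimpl. Qed.

Lemma conjg_eq1 c x : conjg c x = gone -> x = gone.
Proof. intro E. apply (mul_cancel_l c), (mul_cancel_r (ginv c)). gsimpl. exact E. Qed.

Lemma conjg_inj c x y : conjg c x = conjg c y -> x = y.
Proof. intro E. now rewrite <- (conjgK c x), E, conjgK. Qed.

Lemma conjgM c x y : conjg c (gmul x y) = gmul (conjg c x) (conjg c y).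
Proof. gsimpl. reflexivity. Qed.

Lemma conjg_mul c d x : conjg (gmul c d) x = conjg c (conjg d x).
Proof. gsimpl. rewrite invMg. gsimpl. reflexivity. Qed.

Lemma gpow_add x m n : gpow x (m + n) = gmul (gpow x m) (gpow x n).
Proof. induction m; simpl; [now rewrite gmul1l|]. now rewrite IHm, gmulA. Qed.

Lemma gpow_succ_r x n : gpow x (S n) = gmul (gpow x n) x.
Proof. rewrite <- Nat.add_1_r, gpow_add. simpl. now rewrite gmul1r. Qed.

Lemma gpow_conjg c x n : gpow (conjg c x) n = conjg c (gpow x n).
Proof. induction n; simpl; [gsimpl; reflexivity|]. rewrite IHn. gsimpl. reflexivity. Qed.

Lemma commute_sym x y : commute x y -> commute y x.
Proof. unfold commute; auto. Qed.

Lemma commuteM x y z : commute x y -> commute x z -> commute x (gmul y z).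
Proof. unfold commute. intros Cy Cz. now rewrite gmulA, Cy, <- gmulA, Cz, gmulA. Qed.

Lemma commuteMl x y z : commute x z -> commute y z -> commute (gmul x y) z.
Proof. intros Cx Cy. apply commute_sym, commuteM; now apply commute_sym. Qed.

Lemma commuteV x y : commute x y -> commute (ginv x) y.
Proof.
  unfold commute; intro E. apply (mul_cancel_l x), (mul_cancel_r x).
  gsimpl. symmetry. exact E.
Qed.

Lemma commuteV_iff x y : commute (ginv x) y <-> commute x y.
Proof. split; [rewrite <- (invgK x) at 2|]; apply commuteV. Qed.

Lemma commute_conjg c x y : commute (conjg c x) (conjg c y) <-> commute x y.
Proof.
  unfold commute. rewrite <- !conjgM. split; [|intros ->; reflexivity].
  intro E. rewrite <- (conjgK c (gmul x y)), E. apply conjgK.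
Qed.
End GroupCalculus.

Section IntegerPowers.
Context {G : group}.
Implicit Types u : G.

Definition zpow u (n : Z) : G :=
  if Z.leb 0 n then gpow u (Z.to_nat n) else gpow (ginv u) (Z.to_nat (- n)).

Lemma zpow_succ u n : zpow u (n + 1) = gmul (zpow u n) u.
Proof.
  unfold zpow. destruct (Z.leb_spec 0 n), (Z.leb_spec 0 (n + 1)); try lia.
  - replace (Z.to_nat (n + 1)) with (S (Z.to_nat n)) by lia. apply gpow_succ_r.
  - replace n with (-1)%Z by lia. simpl. now gsimpl.
  - replace (Z.to_nat (- n)) with (S (Z.to_nat (- (n + 1)))) by lia.
    rewrite gpow_succ_r. now gsimpl.
Qed.

Lemma zpow_add u m n : zpow u (m + n) = gmul (zpow u m) (zpow u n).
Proof.
  revert m. induction n as [|n IH|n IH] using Z.peano_ind; intro m.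
  - rewrite Z.add_0_r. unfold zpow at 3. simpl. now rewrite gmul1r.
  - replace (m + Z.succ n)%Z with (m + n + 1)%Z by lia. rewrite <- Z.add_1_r.
    now rewrite !zpow_succ, IH, gmulA.
  - specialize (IH m). replace (m + n)%Z with (m + Z.pred n + 1)%Z in IH by lia.
    replace n with (Z.pred n + 1)%Z in IH at 2 by lia.
    rewrite !zpow_succ, gmulA in IH. exact (mul_cancel_r _ _ _ IH).
Qed.

Lemma zpow_of_nat u k : zpow u (Z.of_nat k) = gpow u k.
Proof. unfold zpow. destruct (Z.leb_spec 0 (Z.of_nat k)); [|lia]. now rewrite Nat2Z.id. Qed.

Lemma zpow1 u : zpow u 1 = u.
Proof. apply gmul1r. Qed.

Lemma zpowN1 u : zpow u (-1) = ginv u.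
Proof. apply gmul1r. Qed.
End IntegerPowers.

Lemma hom_one {G H : group} {f : G -> H} : is_hom G H f -> f gone = gone.
Proof. intro Hf. apply (mul_cancel_l (f gone)). now rewrite <- Hf, !gmul1r. Qed.

Lemma hom_inv {G H : group} {f : G -> H} : is_hom G H f -> forall x, f (ginv x) = ginv (f x).
Proof. intros Hf x. apply mul_eq1_r. now rewrite <- Hf, gmulVr, (hom_one Hf). Qed.

Lemma image_subgroup {G H : group} {f : G -> H} : is_hom G H f -> is_subgroup H (image f).
Proof.
  intro Hf. split; [|split].
  - exists gone. exact (hom_one Hf).
  - intros x y [p <-] [q <-]. exists (gmul p q). apply Hf.
  - intros x [p <-]. exists (ginv p). apply (hom_inv Hf).
Qed.

Lemma hom_comp {G H K : group} {f : G -> H} {g : H -> K} :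
  is_hom G H f -> is_hom H K g -> is_hom G K (fun x => g (f x)).
Proof. intros Hf Hg x y. now rewrite Hf, Hg. Qed.

Record perm (X : Type) := Perm {
  perm_fun : X -> X;
  perm_inv : X -> X;
  perm_funK : forall x, perm_fun (perm_inv x) = x;
  perm_invK : forall x, perm_inv (perm_fun x) = x }.
Arguments Perm {X}.
Arguments perm_fun {X}.
Arguments perm_inv {X}.
Arguments perm_funK {X}.
Arguments perm_invK {X}.

Lemma perm_ext {X : Type} (p q : perm X) : (forall x, perm_fun p x = perm_fun q x) -> p = q.
Proof.
  destruct p as [f g fK gK], q as [f' g' fK' gK']; simpl; intro E.
  assert (f = f') by (apply functional_extensionality; exact E). subst f'.
  assert (g = g').
  { apply functional_extensionality; intro x. now rewrite <- (gK' (g x)), fK. }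
  subst g'. f_equal; apply proof_irrelevance.
Qed.

Definition perm_mul {X : Type} (p q : perm X) : perm X.
Proof.
  refine (Perm (fun x => perm_fun p (perm_fun q x)) (fun x => perm_inv q (perm_inv p x)) _ _).
  - intro x. now rewrite !perm_funK.
  - intro x. now rewrite !perm_invK.
Defined.

Definition perm_group (X : Type) : group.
Proof.
  refine (@Group (perm X) perm_mul
    (Perm (fun x => x) (fun x => x) (fun x => eq_refl) (fun x => eq_refl))
    (fun p => Perm (perm_inv p) (perm_fun p) (perm_invK p) (perm_funK p)) _ _ _ _ _).
  all: intros; apply perm_ext; intros; simpl; now rewrite ?perm_funK, ?perm_invK.
Defined.

Lemma pigeonhole {X : Type} (l : list X) (f : nat -> X) :
  (forall i, In (f i) l) -> exists i j, i < j /\ f i = f j.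
Proof.
  intro Hf. apply NNPP. intro Hn.
  assert (Inj : forall i j, f i = f j -> i = j).
  { intros i j E. destruct (lt_eq_lt_dec i j) as [[L|L]|L]; auto; exfalso; apply Hn; eauto. }
  assert (ND : NoDup (map f (seq 0 (S (length l))))).
  { apply NoDup_map_NoDup_ForallPairs; [intros x y _ _; apply Inj|apply seq_NoDup]. }
  assert (Sub : incl (map f (seq 0 (S (length l)))) l).
  { intros x Hx. apply in_map_iff in Hx. destruct Hx as [i [<- _]]. apply Hf. }
  pose proof (NoDup_incl_length ND Sub) as Hl. rewrite length_map, length_seq in Hl. lia.
Qed.

Lemma infinite_of_injective {X : Type} (S : X -> Prop) (f : nat -> X) :
  (forall i j, f i = f j -> i = j) -> (forall i, S (f i)) -> ~ finite_set S.
Proof.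
  intros Inj HS [l Hl]. destruct (pigeonhole l f (fun i => Hl _ (HS i))) as [i [j [L E]]].
  apply Inj in E. lia.
Qed.

Lemma finite_set_nontrivial {G : group} (S : G -> Prop) :
  ~ finite_set S -> exists x, S x /\ x <> gone.
Proof.
  intro H. apply NNPP. intro Hn. apply H. exists [gone]. intros x Hx.
  left. apply NNPP. intro Hne. apply Hn. eauto.
Qed.

(* Two powers of g falling in the same coset of H differ by a power lying in H. *)
Lemma finite_index_pow_mem {G : group} (H : G -> Prop) (g : G) :
  is_subgroup G H -> finite_index G H -> exists k, 1 <= k /\ H (gpow g k).
Proof.
  intros [_ [HM HV]] [l Hl].
  destruct (choice (fun i c => In c l /\ exists h, H h /\ gpow g i = gmul c h)) as [f Hf].
  { intro i. destruct (Hl (gpow g i)) as [c [h [Hc [Hh E]]]]. eauto. }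
  destruct (pigeonhole l f (fun i => proj1 (Hf i))) as [i [j [L E]]].
  exists (j - i). split; [lia|].
  destruct (proj2 (Hf i)) as [hi [Hhi Ei]], (proj2 (Hf j)) as [hj [Hhj Ej]].
  replace (gpow g (j - i)) with (gmul (ginv hi) hj); [apply HM; auto|].
  apply (mul_cancel_l (gpow g i)). rewrite <- gpow_add, Nat.add_comm, Nat.sub_add by lia.
  rewrite Ej, Ei, E. gsimpl. reflexivity.
Qed.

Section WordCommutation.
Context {T : Type}.
Implicit Types h u v x y : list T.

Fixpoint list_pow h n : list T :=
  match n with 0 => [] | S n => h ++ list_pow h n end.

Lemma list_pow_comm h x n : x ++ h = h ++ x -> x ++ list_pow h n = list_pow h n ++ x.
Proof.
  intro E. induction n; simpl; [now rewrite app_nil_r|].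
  now rewrite app_assoc, E, <- app_assoc, IHn, app_assoc.
Qed.

Lemma list_pow_succ_r h n : list_pow h (S n) = list_pow h n ++ h.
Proof. exact (list_pow_comm h h n eq_refl). Qed.

Lemma length_list_pow h n : h <> [] -> n <= length (list_pow h n).
Proof.
  intro Hh. induction n; simpl; [lia|]. rewrite length_app.
  destruct h; [congruence|simpl; lia].
Qed.

Lemma comm_prefix_pow h x n : x ++ h = h ++ x -> length x <= length (list_pow h n) ->
  x = firstn (length x) (list_pow h n).
Proof.
  intros E Hl. pose proof (f_equal (firstn (length x)) (list_pow_comm h x n E)) as P.
  rewrite !firstn_app, Nat.sub_diag, firstn_all, firstn_O, app_nil_r in P.
  replace (length x - length (list_pow h n)) with 0 in P by lia.
  now rewrite firstn_O, app_nil_r in P.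
Qed.

(* Both words are prefixes of a long power of h, so the shorter one is a prefix of the longer. *)
Lemma comm_split h x y : h <> [] -> x ++ h = h ++ x -> y ++ h = h ++ y ->
  length x <= length y -> exists y', y = x ++ y' /\ y' ++ h = h ++ y'.
Proof.
  intros Hh Hx Hy Hl. pose proof (length_list_pow h (length y) Hh) as Hn.
  assert (Exy : x = firstn (length x) y).
  { rewrite (comm_prefix_pow h y (length y) Hy), firstn_firstn, Nat.min_l by lia.
    apply comm_prefix_pow; [exact Hx|lia]. }
  exists (skipn (length x) y).
  assert (Y : y = x ++ skipn (length x) y) by (rewrite Exy at 1; symmetry; apply firstn_skipn).
  split; [exact Y|]. apply (app_inv_head x).
  now rewrite app_assoc, <- Y, Hy, Y at 1; rewrite !app_assoc, Hx.
Qed.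

Lemma app_comm_trans h x y : h <> [] ->
  x ++ h = h ++ x -> y ++ h = h ++ y -> x ++ y = y ++ x.
Proof.
  intro Hh. remember (length x + length y) as n eqn:En. revert x y En.
  induction n as [n IH] using lt_wf_ind. intros x y En Hx Hy.
  assert (Step : forall u v, length u <= length v -> length u + length v = n ->
            u ++ h = h ++ u -> v ++ h = h ++ v -> u ++ v = v ++ u).
  { intros u v Luv Euv Hu Hv. destruct u as [|a u]; [now rewrite app_nil_r|].
    destruct (comm_split h (a :: u) v Hh Hu Hv Luv) as [v' [-> Hv']].
    assert (Lt : length (a :: u) + length v' < n) by (rewrite <- Euv, length_app; simpl; lia).
    rewrite (IH _ Lt (a :: u) v' eq_refl Hu Hv') at 1. now rewrite app_assoc. }
  destruct (Nat.le_ge_cases (length x) (length y)).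
  - now apply Step.
  - symmetry. apply Step; auto; lia.
Qed.
End WordCommutation.

Definition letter (A B : group) : Type := (A + B)%type.

Ltac case_emi := repeat match goal with |- context [emi ?P] => destruct (emi P) end.

Section ReducedWords.
Context {A B : group}.
Notation L := (letter A B).
Implicit Types (l : L) (u v w : list L).

Definition side l : bool := match l with inl _ => true | inr _ => false end.

Definition letter_nontrivial l : Prop :=
  match l with inl a => a <> gone | inr b => b <> gone end.

Fixpoint reduced w : Prop :=
  match w with
  | [] => True
  | l :: r => letter_nontrivial l /\
      match r with [] => True | l' :: _ => side l <> side l' end /\ reduced r
  end.

Lemma reduced_cons l w : reduced (l :: w) -> reduced w.
Proof. simpl; tauto. Qed.

Definition lmul_word1 (x : A) w : list L :=
  match w with
  | inl y :: r => if emi (gmul x y = gone) then r else inl (gmul x y) :: r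
  | _ => if emi (x = gone) then w else inl x :: w
  end.

Definition lmul_word2 (x : B) w : list L :=
  match w with
  | inr y :: r => if emi (gmul x y = gone) then r else inr (gmul x y) :: r
  | _ => if emi (x = gone) then w else inr x :: w
  end.

Lemma lmul_word1_reduced x w : reduced w -> reduced (lmul_word1 x w).
Proof.
  destruct w as [|[y|y] r]; simpl; intros; case_emi; simpl; intuition (auto; try congruence).
  all: destruct r as [|[z|z] r]; simpl in *; intuition (auto; try congruence).
Qed.

Lemma lmul_word2_reduced x w : reduced w -> reduced (lmul_word2 x w).
Proof.
  destruct w as [|[y|y] r]; simpl; intros; case_emi; simpl; intuition (auto; try congruence).
  all: destruct r as [|[z|z] r]; simpl in *; intuition (auto; try congruence).
Qed.

Lemma lmul_word1_1 w : reduced w -> lmul_word1 gone w = w.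
Proof.
  destruct w as [|[y|y] r]; simpl; intros; case_emi; rewrite ?gmul1l in *;
    intuition (auto; try congruence).
Qed.

Lemma lmul_word2_1 w : reduced w -> lmul_word2 gone w = w.
Proof.
  destruct w as [|[y|y] r]; simpl; intros; case_emi; rewrite ?gmul1l in *;
    intuition (auto; try congruence).
Qed.

Lemma lmul_word1_cons a w : reduced (inl a :: w) -> lmul_word1 a w = inl a :: w.
Proof. destruct w as [|[y|y] r]; simpl; intros; case_emi; intuition (auto; try congruence). Qed.

Lemma lmul_word2_cons b w : reduced (inr b :: w) -> lmul_word2 b w = inr b :: w.
Proof. destruct w as [|[y|y] r]; simpl; intros; case_emi; intuition (auto; try congruence). Qed.

Lemma lmul_word1_length x w : length (lmul_word1 x w) <= S (length w).
Proof. destruct w as [|[y|y] r]; simpl; case_emi; simpl; lia. Qed.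

Lemma lmul_word2_length x w : length (lmul_word2 x w) <= S (length w).
Proof. destruct w as [|[y|y] r]; simpl; case_emi; simpl; lia. Qed.

Lemma lmul_word1M x y w : reduced w -> lmul_word1 x (lmul_word1 y w) = lmul_word1 (gmul x y) w.
Proof.
  destruct w as [|[z|z] r]; simpl; intros Hr.
  - case_emi; subst; simpl; case_emi; rewrite ?gmul1r in *; congruence.
  - destruct Hr as [Hz [Hs Hr]]. destruct (emi (gmul y z = gone)) as [e|e].
    + replace (gmul (gmul x y) z) with x by (now rewrite <- gmulA, e, gmul1r).
      destruct r as [|[u|u] r']; simpl in *; case_emi; congruence.
    + simpl. rewrite !gmulA. case_emi; congruence.
  - case_emi; subst; simpl; case_emi; rewrite ?gmul1r in *; congruence.
Qed.

Lemma lmul_word2M x y w : reduced w -> lmul_word2 x (lmul_word2 y w) = lmul_word2 (gmul x y) w.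
Proof.
  destruct w as [|[z|z] r]; simpl; intros Hr.
  - case_emi; subst; simpl; case_emi; rewrite ?gmul1r in *; congruence.
  - case_emi; subst; simpl; case_emi; rewrite ?gmul1r in *; congruence.
  - destruct Hr as [Hz [Hs Hr]]. destruct (emi (gmul y z = gone)) as [e|e].
    + replace (gmul (gmul x y) z) with x by (now rewrite <- gmulA, e, gmul1r).
      destruct r as [|[u|u] r']; simpl in *; case_emi; congruence.
    + simpl. rewrite !gmulA. case_emi; congruence.
Qed.

Definition lmul_word l w : list L :=
  match l with inl x => lmul_word1 x w | inr y => lmul_word2 y w end.

Lemma lmul_word_length l w : length (lmul_word l w) <= S (length w).
Proof. destruct l; [apply lmul_word1_length|apply lmul_word2_length]. Qed.

Fixpoint last_error w : option L :=
  match w with [] => None | [l] => Some l | _ :: r => last_error r end.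

Definition joinable u v : Prop :=
  match last_error u, hd_error v with
  | Some l, Some l' => side l <> side l'
  | _, _ => True
  end.

Lemma last_error_cons l w : w <> [] -> last_error (l :: w) = last_error w.
Proof. destruct w; [congruence|reflexivity]. Qed.

Lemma last_error_app u v : v <> [] -> last_error (u ++ v) = last_error v.
Proof.
  intro Hv. induction u as [|l u IH]; [reflexivity|]. simpl app.
  rewrite last_error_cons; [exact IH|]. destruct u, v; simpl; congruence.
Qed.

Lemma last_error_snoc u l : last_error (u ++ [l]) = Some l.
Proof. now rewrite last_error_app. Qed.

Lemma joinable_snoc_cons u l l' v : joinable (u ++ [l]) (l' :: v) <-> side l <> side l'.
Proof. unfold joinable. rewrite last_error_snoc. reflexivity. Qed.

Lemma reduced_app u v : reduced (u ++ v) <-> reduced u /\ reduced v /\ joinable u v.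
Proof.
  unfold joinable. induction u as [|l [|l' u] IH].
  - simpl. destruct (hd_error v); tauto.
  - destruct v; simpl; tauto.
  - rewrite last_error_cons by discriminate.
    change ((l :: l' :: u) ++ v) with (l :: ((l' :: u) ++ v)).
    change (reduced (l :: (l' :: u) ++ v)) with
      (letter_nontrivial l /\ side l <> side l' /\ reduced ((l' :: u) ++ v)).
    change (reduced (l :: l' :: u)) with
      (letter_nontrivial l /\ side l <> side l' /\ reduced (l' :: u)).
    rewrite IH. tauto.
Qed.

Lemma reduced_app_intro u v : reduced u -> reduced v -> joinable u v -> reduced (u ++ v).
Proof. intros. apply reduced_app; tauto. Qed.

Definition first_side w s : Prop := exists l w', w = l :: w' /\ side l = s.
Definition last_side w s : Prop := exists w' l, w = w' ++ [l] /\ side l = s.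

Lemma first_last_side w : w <> [] -> exists s s', first_side w s /\ last_side w s'.
Proof.
  intro Hw. destruct w as [|l w']; [congruence|].
  destruct (exists_last Hw) as [w2 [l' E]].
  exists (side l), (side l'). split; [now exists l, w'|now exists w2, l'].
Qed.

Lemma joinable_sides u v s s' : last_side u s -> first_side v s' -> s <> s' -> joinable u v.
Proof.
  intros [u' [l [-> Hl]]] [l' [v' [-> Hl']]] Hs. apply joinable_snoc_cons. congruence.
Qed.

Lemma first_side_app_l u v s : u <> [] -> first_side (u ++ v) s -> first_side u s.
Proof.
  intros Hu [l [w' [E H]]]. destruct u as [|l' u]; [congruence|].
  injection E as -> _. now exists l, u.
Qed.

Definition letter_inv l : L := match l with inl a => inl (ginv a) | inr b => inr (ginv b) end.

Definition word_inv w : list L := rev (map letter_inv w).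

Lemma side_letter_inv l : side (letter_inv l) = side l.
Proof. now destruct l. Qed.

Lemma word_inv_cons l w : word_inv (l :: w) = word_inv w ++ [letter_inv l].
Proof. reflexivity. Qed.

Lemma word_inv_app u v : word_inv (u ++ v) = word_inv v ++ word_inv u.
Proof. unfold word_inv. now rewrite map_app, rev_app_distr. Qed.

Lemma word_invK w : word_inv (word_inv w) = w.
Proof.
  unfold word_inv. rewrite map_rev, rev_involutive, map_map, <- map_id.
  apply map_ext. intros []; simpl; now rewrite invgK.
Qed.

Lemma first_side_word_inv w s : last_side w s -> first_side (word_inv w) s.
Proof.
  intros [w' [l [-> H]]]. exists (letter_inv l), (word_inv w').
  now rewrite word_inv_app, side_letter_inv.
Qed.

Lemma last_side_word_inv w s : first_side w s -> last_side (word_inv w) s.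
Proof.
  intros [l [w' [-> H]]]. exists (word_inv w'), (letter_inv l).
  now rewrite word_inv_cons, side_letter_inv.
Qed.

Lemma letter_nontrivial_inv l : letter_nontrivial l -> letter_nontrivial (letter_inv l).
Proof. destruct l; simpl; intros H E; exact (H (invg_eq1 _ E)). Qed.

Lemma reduced_word_inv w : reduced w -> reduced (word_inv w).
Proof.
  induction w as [|l [|l' w] IH]; intro H; [exact I| |].
  - simpl. repeat split. exact (letter_nontrivial_inv _ (proj1 H)).
  - rewrite word_inv_cons. destruct H as [Hl [Hs H]].
    apply reduced_app_intro; [now apply IH| |].
    + simpl. repeat split. now apply letter_nontrivial_inv.
    + rewrite word_inv_cons. apply joinable_snoc_cons. rewrite !side_letter_inv.
      now apply not_eq_sym.
Qed.
End ReducedWords.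

Lemma hom_conjg {G H : group} {f : G -> H} c x :
  is_hom G H f -> f (conjg c x) = conjg (f c) (f x).
Proof. intro Hf. unfold conjg. now rewrite !Hf, (hom_inv Hf). Qed.

Section FreeProduct.
Context {D1 D2 G : group} {i1 : D1 -> G} {i2 : D2 -> G}.
Hypothesis FP : is_free_product D1 D2 G i1 i2.
Notation L := (letter D1 D2).
Implicit Types (l : L) (u v w k : list L) (c g h x y : G).

Lemma hom_i1 : is_hom D1 G i1.
Proof. exact (proj1 FP). Qed.

Lemma hom_i2 : is_hom D2 G i2.
Proof. exact (proj1 (proj2 FP)). Qed.

Lemma fp_hom_ext (H : group) (f f' : G -> H) : is_hom G H f -> is_hom G H f' ->
  (forall a, f (i1 a) = f' (i1 a)) -> (forall b, f (i2 b) = f' (i2 b)) -> forall g, f g = f' g.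
Proof.
  intros Hf Hf' E1 E2 g. destruct FP as [h1 [h2 U]].
  destruct (U H (fun a => f (i1 a)) (fun b => f (i2 b)) (hom_comp h1 Hf) (hom_comp h2 Hf))
    as [F [_ [_ [_ FU]]]].
  rewrite (FU f Hf (fun _ => eq_refl) (fun _ => eq_refl) g).
  symmetry. apply FU; auto; intros; symmetry; auto.
Qed.

Definition letter_val l : G := match l with inl a => i1 a | inr b => i2 b end.

Definition eval w : G := fold_right (fun l g => gmul (letter_val l) g) gone w.

Lemma eval_app u v : eval (u ++ v) = gmul (eval u) (eval v).
Proof. induction u; simpl; [now rewrite gmul1l|now rewrite IHu, gmulA]. Qed.

Lemma letter_val_inv l : letter_val (letter_inv l) = ginv (letter_val l).
Proof. destruct l; simpl; [apply (hom_inv hom_i1)|apply (hom_inv hom_i2)]. Qed.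

Lemma eval_word_inv w : eval (word_inv w) = ginv (eval w).
Proof.
  induction w as [|l w IH]; simpl; [now rewrite invg1|].
  rewrite word_inv_cons, eval_app, IH, invMg. simpl. now rewrite gmul1r, letter_val_inv.
Qed.

Definition is_word_value g : Prop := exists w, g = eval w.

Definition word_value_indicator g : bool := if emi (is_word_value g) then true else false.

Lemma word_value_indicator_lmul l g :
  word_value_indicator (gmul (letter_val l) g) = word_value_indicator g.
Proof.
  assert (E : is_word_value (gmul (letter_val l) g) <-> is_word_value g).
  { split; intros [w Ew].
    - exists (letter_inv l :: w). simpl. now rewrite <- Ew, letter_val_inv, mulKg.
    - exists (l :: w). simpl. now rewrite Ew. }
  unfold word_value_indicator. case_emi; tauto.
Qed.

Definition twist (t : G -> bool) g : perm (G * bool).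
Proof.
  refine (Perm (fun p => (gmul g (fst p), xorb (snd p) (xorb (t (fst p)) (t (gmul g (fst p))))))
               (fun p => (gmul (ginv g) (fst p),
                          xorb (snd p) (xorb (t (fst p)) (t (gmul (ginv g) (fst p)))))) _ _).
  - intros [x b]; simpl. rewrite mulKVg. now destruct b, (t x), (t (gmul (ginv g) x)).
  - intros [x b]; simpl. rewrite mulKg. now destruct b, (t x), (t (gmul g x)).
Defined.

Lemma twist_hom t : is_hom G (perm_group (G * bool)) (twist t).
Proof.
  intros g h. apply perm_ext. intros [x b]. simpl. rewrite gmulA. f_equal.
  now destruct b, (t x), (t (gmul h x)), (t (gmul (gmul g h) x)).
Qed.

(* The indicator of word values is invariant under the letters, so twisting by it agrees
   with the trivial twist on both factors, hence on all of [G]: the indicator is constant. *)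
Theorem fp_generated g : is_word_value g.
Proof.
  assert (Factor : forall l, twist word_value_indicator (letter_val l)
                             = twist (fun _ => false) (letter_val l)).
  { intro l. apply perm_ext. intros [y b]. simpl. f_equal.
    rewrite word_value_indicator_lmul. now destruct b, (word_value_indicator y). }
  pose proof (fp_hom_ext _ _ _ (twist_hom _) (twist_hom _)
                (fun a => Factor (inl a)) (fun b => Factor (inr b)) g) as E.
  apply (f_equal (fun p => snd (perm_fun p (gone, false)))) in E. simpl in E.
  rewrite gmul1r in E. unfold word_value_indicator in E.
  destruct (emi (is_word_value g)) as [|Ng]; [assumption|].
  destruct (emi (is_word_value gone)) as [|N1]; [discriminate|]. exfalso. apply N1. now exists [].
Qed.

Definition rword : Type := {w : list L | reduced w}.

Lemma rword_ext (p q : rword) : proj1_sig p = proj1_sig q -> p = q.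
Proof. destruct p, q; simpl; intros ->; f_equal; apply proof_irrelevance. Qed.

Definition rword_perm1 (x : D1) : perm rword.
Proof.
  refine (Perm (fun p : rword => exist _ _ (lmul_word1_reduced x _ (proj2_sig p)))
               (fun p : rword => exist _ _ (lmul_word1_reduced (ginv x) _ (proj2_sig p))) _ _).
  all: intros [w Hw]; apply rword_ext; simpl.
  - now rewrite lmul_word1M, gmulVr, lmul_word1_1.
  - now rewrite lmul_word1M, gmulVl, lmul_word1_1.
Defined.

Definition rword_perm2 (x : D2) : perm rword.
Proof.
  refine (Perm (fun p : rword => exist _ _ (lmul_word2_reduced x _ (proj2_sig p)))
               (fun p : rword => exist _ _ (lmul_word2_reduced (ginv x) _ (proj2_sig p))) _ _).
  all: intros [w Hw]; apply rword_ext; simpl.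
  - now rewrite lmul_word2M, gmulVr, lmul_word2_1.
  - now rewrite lmul_word2M, gmulVl, lmul_word2_1.
Defined.

Lemma rword_perm1_hom : is_hom D1 (perm_group rword) rword_perm1.
Proof.
  intros x y. apply perm_ext. intros [w h]. apply rword_ext. simpl. now rewrite lmul_word1M.
Qed.

Lemma rword_perm2_hom : is_hom D2 (perm_group rword) rword_perm2.
Proof.
  intros x y. apply perm_ext. intros [w h]. apply rword_ext. simpl. now rewrite lmul_word2M.
Qed.

Definition rword_action :=
  constructive_indefinite_description _
    (proj2 (proj2 FP) (perm_group rword) _ _ rword_perm1_hom rword_perm2_hom).

(* Van der Waerden's trick: the normal form of [g] is the image of the empty word under the
   action of [g] on reduced words. *)
Definition nf g : list L :=
  proj1_sig (perm_fun (proj1_sig rword_action g) (exist _ [] I)).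

Lemma nf_reduced g : reduced (nf g).
Proof. exact (proj2_sig (perm_fun (proj1_sig rword_action g) (exist _ [] I))). Qed.

Lemma nf1 : nf gone = [].
Proof. unfold nf. now rewrite (hom_one (proj1 (proj2_sig rword_action))). Qed.

Lemma nf_lmul l g : nf (gmul (letter_val l) g) = lmul_word l (nf g).
Proof.
  unfold nf. destruct rword_action as [rho Hrho]. simpl. destruct Hrho as [Hrho [E1 [E2 _]]].
  rewrite Hrho. destruct l; simpl; [rewrite E1|rewrite E2]; reflexivity.
Qed.

Lemma eval_lmul_word l w : reduced w -> eval (lmul_word l w) = gmul (letter_val l) (eval w).
Proof.
  intro Hw. destruct l as [x|x], w as [|[y|y] r]; simpl; case_emi; simpl; subst;
    rewrite ?(hom_one hom_i1), ?(hom_one hom_i2), ?gmul1l; try reflexivity;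
    rewrite gmulA, <- ?hom_i1, <- ?hom_i2; try reflexivity;
    match goal with E : gmul _ _ = gone |- _ => rewrite E end;
    now rewrite ?(hom_one hom_i1), ?(hom_one hom_i2), gmul1l.
Qed.

Lemma eval_nf g : eval (nf g) = g.
Proof.
  destruct (fp_generated g) as [w ->]. induction w as [|l w IH]; simpl.
  - now rewrite nf1.
  - now rewrite nf_lmul, eval_lmul_word, IH by apply nf_reduced.
Qed.

Lemma nf_eval w : reduced w -> nf (eval w) = w.
Proof.
  induction w as [|l w IH]; intro Hw; [apply nf1|].
  simpl. rewrite nf_lmul, IH by exact (reduced_cons _ _ Hw).
  destruct l; [apply lmul_word1_cons|apply lmul_word2_cons]; exact Hw.
Qed.

Lemma length_nf_eval w : length (nf (eval w)) <= length w.
Proof.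
  induction w as [|l w IH]; simpl; [now rewrite nf1|].
  rewrite nf_lmul. pose proof (lmul_word_length l (nf (eval w))). lia.
Qed.

Lemma eval_reduced_inj u v : reduced u -> reduced v -> eval u = eval v -> u = v.
Proof. intros Hu Hv E. now rewrite <- (nf_eval u Hu), <- (nf_eval v Hv), E. Qed.

Lemma nf_eval_app u v : reduced (u ++ v) -> nf (gmul (eval u) (eval v)) = u ++ v.
Proof. intro H. rewrite <- eval_app. now apply nf_eval. Qed.

Lemma eval_merge u l l' v : side l = side l' ->
  exists m, gmul (eval (u ++ [l])) (eval (l' :: v)) = eval (u ++ m :: v).
Proof.
  destruct l as [a|a], l' as [b|b]; intro H; try discriminate.
  - exists (inl (gmul a b)). rewrite !eval_app. simpl. rewrite gmul1r, hom_i1. now gsimpl.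
  - exists (inr (gmul a b)). rewrite !eval_app. simpl. rewrite gmul1r, hom_i2. now gsimpl.
Qed.

(* [w k] is reduced while [k w] cancels at the junction, so their normal forms differ in length. *)
Lemma not_commute_merge w k s : reduced (w ++ k) -> first_side w s -> last_side k s ->
  ~ commute (eval w) (eval k).
Proof.
  intros Hwk [l [w' [-> Hl]]] [k' [l' [-> Hl']]] C.
  destruct (eval_merge k' l' l w' ltac:(congruence)) as [m Em].
  pose proof (length_nf_eval (k' ++ m :: w')) as Len.
  rewrite <- Em, <- C, nf_eval_app, !length_app in Len by exact Hwk. simpl in Len. lia.
Qed.

Lemma commute_aligned w k s : reduced w -> reduced k ->
  first_side w s -> last_side w (negb s) -> first_side k s -> last_side k (negb s) ->
  commute (eval w) (eval k) -> w ++ k = k ++ w.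
Proof.
  intros Hw Hk Fw Lw Fk Lk C. pose proof (no_fixpoint_negb s) as Ns.
  rewrite <- (nf_eval_app w k), <- (nf_eval_app k w), C; try reflexivity.
  all: apply reduced_app_intro; auto; eapply joinable_sides; eauto.
Qed.

Definition cyclically_reduced k : Prop :=
  reduced k /\ exists s, first_side k s /\ last_side k (negb s).

Lemma bool_eq_or_negb (b s : bool) : b = s \/ b = negb s.
Proof. destruct b, s; auto. Qed.

Lemma cyclically_reduced_centralizer k x : cyclically_reduced k -> commute x (eval k) ->
  exists w, w ++ k = k ++ w /\ (x = eval w \/ ginv x = eval w).
Proof.
  intros [Hk [s [Fk Lk]]] C. pose proof (no_fixpoint_negb s) as Ns.
  rewrite <- (eval_nf x) in C |- *. pose proof (nf_reduced x) as Hw.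
  destruct (nf x) as [|l w'] eqn:Ex.
  { exists []. split; [now rewrite app_nil_r|now left]. }
  destruct (first_last_side (nf x) ltac:(congruence)) as [s1 [s2 [Fw Lw]]].
  rewrite <- Ex in *.
  destruct (bool_eq_or_negb s1 s) as [->| ->], (bool_eq_or_negb s2 s) as [->| ->].
  - exfalso. apply (not_commute_merge k (nf x) s); [|exact Fk|exact Lw|now apply commute_sym].
    apply reduced_app_intro; auto. eapply joinable_sides; eauto.
  - exists (nf x). split; [|now left]. eapply commute_aligned; eauto.
  - exists (word_inv (nf x)). split; [|right; now rewrite eval_word_inv].
    apply (commute_aligned _ _ s);
      auto using reduced_word_inv, first_side_word_inv, last_side_word_inv.
    rewrite eval_word_inv. now apply commuteV.
  - exfalso. apply (not_commute_merge (nf x) k (negb s)); auto.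
    apply reduced_app_intro; auto. eapply joinable_sides; eauto using not_eq_sym.
Qed.

Lemma cyclically_reduced_centralizer_abelian k x y : cyclically_reduced k ->
  commute x (eval k) -> commute y (eval k) -> commute x y.
Proof.
  intros Hk Cx Cy.
  assert (Hne : k <> []) by (destruct Hk as [_ [s [[l [k' [-> _]]] _]]]; discriminate).
  destruct (cyclically_reduced_centralizer k x Hk Cx) as [u [Eu Hu]].
  destruct (cyclically_reduced_centralizer k y Hk Cy) as [v [Ev Hv]].
  assert (Cuv : commute (eval u) (eval v)).
  { unfold commute. now rewrite <- !eval_app, (app_comm_trans k u v Hne Eu Ev). }
  assert (Lift : forall z w, (z = eval w \/ ginv z = eval w) ->
                 forall t, commute (eval w) t -> commute z t).
  { intros z w [->|E] t Ct; [exact Ct|]. apply commuteV_iff. now rewrite E. }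
  apply (Lift _ _ Hu), commute_sym, (Lift _ _ Hv), commute_sym, Cuv.
Qed.

Lemma conj_shorten g l w l' : nf g = l :: w ++ [l'] -> side l = side l' ->
  exists g', g = conjg (letter_val l) g' /\ length (nf g') <= S (length w).
Proof.
  intros E Hs. destruct (eval_merge w l' l [] (eq_sym Hs)) as [m Em].
  exists (eval (w ++ [m])). split.
  - rewrite <- Em, <- (eval_nf g), E. simpl. rewrite eval_app. now gsimpl.
  - pose proof (length_nf_eval (w ++ [m])) as Len. rewrite length_app in Len. simpl in Len. lia.
Qed.

(* Cyclic reduction: strip matching end letters by conjugation until none are left. *)
Lemma conj_letter_or_cyclically_reduced g : g <> gone -> exists c h, g = conjg c h /\
  ((exists a, a <> gone /\ h = i1 a) \/ (exists b, b <> gone /\ h = i2 b) \/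
   cyclically_reduced (nf h)).
Proof.
  remember (length (nf g)) as n eqn:En. revert g En.
  induction n as [n IH] using lt_wf_ind. intros g En Hg.
  pose proof (nf_reduced g) as Hr.
  destruct (nf g) as [|l [|l1 w]] eqn:E.
  - exfalso. apply Hg. now rewrite <- (eval_nf g), E.
  - exists gone, g. split; [now rewrite conjg_by1|].
    rewrite <- (eval_nf g), E. simpl. rewrite gmul1r.
    destruct l as [a|b]; simpl in Hr; [left|right; left]; eexists; split; try reflexivity; apply Hr.
  - destruct (exists_last (l := l1 :: w)) as [w' [l' Ew]]; [discriminate|]. rewrite Ew in E.
    destruct (bool_dec (side l) (side l')) as [Hs|Hs].
    + destruct (conj_shorten g l w' l' E Hs) as [g' [-> Hl']].
      assert (Lt : length (nf g') < n).
      { rewrite En, Ew. simpl. rewrite length_app. simpl. lia. }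
      assert (Hg' : g' <> gone) by (intros ->; now rewrite conjg1 in Hg).
      destruct (IH _ Lt g' eq_refl Hg') as [c [h [-> Hh]]].
      exists (gmul (letter_val l) c), h. split; [now rewrite conjg_mul|exact Hh].
    + exists gone, g. split; [now rewrite conjg_by1|]. right; right. rewrite E.
      split; [rewrite <- Ew; exact Hr|]. exists (side l). split; [now exists l, (w' ++ [l'])|].
      exists (l :: w'), l'. split; [reflexivity|]. now destruct (side l), (side l').
Qed.

Lemma conj_letter_or_abelian_centralizer g : g <> gone -> exists c,
  (exists a, a <> gone /\ g = conjg c (i1 a)) \/ (exists b, b <> gone /\ g = conjg c (i2 b)) \/
  (forall x y, commute x g -> commute y g -> commute x y).
Proof.
  intro Hg. destruct (conj_letter_or_cyclically_reduced g Hg) as [c [h [-> Hh]]].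
  exists c. destruct Hh as [[a [Ha ->]]|[[b [Hb ->]]|Hh]]; [left|right; left|right; right]; eauto.
  intros x y Cx Cy. rewrite <- (commute_conjg (ginv c)).
  apply (cyclically_reduced_centralizer_abelian (nf h)); [exact Hh| |];
    rewrite eval_nf, <- (conjgK c h), commute_conjg; assumption.
Qed.

Lemma strip_left1 w : reduced w -> exists a r p,
  eval w = gmul (i1 a) (eval r) /\ reduced r /\ w = p ++ r /\ (r = [] \/ first_side r false).
Proof.
  intro Hw. destruct w as [|[a|b] r].
  - exists gone, [], []. simpl. rewrite (hom_one hom_i1), gmul1l. auto.
  - exists a, r, [inl a]. split; [reflexivity|]. split; [exact (reduced_cons _ _ Hw)|].
    split; [reflexivity|]. destruct r as [|l r]; [now left|right].
    exists l, r. split; [reflexivity|]. destruct l; simpl in Hw; tauto.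
  - exists gone, (inr b :: r), []. rewrite (hom_one hom_i1), gmul1l.
    split; [reflexivity|]. split; [exact Hw|]. split; [reflexivity|]. right. now exists (inr b), r.
Qed.

Lemma letter_sandwich1 g : exists a e m, g = gmul (i1 a) (gmul (eval m) (i1 e)) /\
  reduced m /\ (m = [] \/ (first_side m false /\ last_side m false)).
Proof.
  destruct (strip_left1 (nf g) (nf_reduced g)) as [a [r [p [Eg [Hr [_ Fr]]]]]].
  destruct (strip_left1 (word_inv r) (reduced_word_inv r Hr)) as [e [r2 [q [Er [Hr2 [Eq Fr2]]]]]].
  exists a, (ginv e), (word_inv r2). split; [|split; [now apply reduced_word_inv|]].
  - rewrite <- (eval_nf g), Eg. f_equal.
    rewrite <- (invgK (eval r)), <- eval_word_inv, Er, invMg, eval_word_inv, (hom_inv hom_i1).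
    reflexivity.
  - destruct Fr2 as [->|F2]; [now left|right]. split; [|now apply last_side_word_inv].
    assert (Hr' : r = word_inv r2 ++ word_inv q) by (now rewrite <- word_inv_app, <- Eq, word_invK).
    destruct Fr as [->|Fr]; [destruct F2 as [l [r2' [-> _]]]; destruct q; discriminate|].
    apply (first_side_app_l _ (word_inv q)); [|now rewrite <- Hr'].
    destruct F2 as [l [r2' [-> _]]]. rewrite word_inv_cons. now destruct (word_inv r2').
Qed.

Lemma eval_sandwich_neq m d1 d2 : reduced m -> first_side m false -> last_side m false ->
  d1 <> gone -> d2 <> gone -> gmul (eval m) (i1 d2) <> gmul (i1 d1) (eval m).
Proof.
  intros Hm Fm Lm H1 H2 E.
  assert (R1 : reduced (m ++ [inl d2])).
  { apply reduced_app_intro; [exact Hm|simpl; auto|].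
    apply (joinable_sides _ _ false true); [exact Lm|now exists (inl d2), []|discriminate]. }
  assert (R2 : reduced ([inl d1] ++ m)).
  { apply reduced_app_intro; [simpl; auto|exact Hm|].
    apply (joinable_sides _ _ true false); [now exists [], (inl d1)|exact Fm|discriminate]. }
  assert (Ev : eval (m ++ [inl d2]) = eval ([inl d1] ++ m)).
  { rewrite !eval_app. simpl. now rewrite !gmul1r. }
  apply (eval_reduced_inj _ _ R1 R2) in Ev.
  destruct Fm as [l [m' [-> Hl]]]. simpl in Ev. injection Ev as -> _. discriminate.
Qed.

Lemma centralizer_letter1 d x : d <> gone -> commute x (i1 d) -> exists a, x = i1 a.
Proof.
  intros Hd C. destruct (letter_sandwich1 x) as [a [e [m [-> [Hm [->|[Fm Lm]]]]]]].
  - exists (gmul a e). simpl. now rewrite gmul1l, hom_i1.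
  - exfalso. apply (eval_sandwich_neq m (conjg (ginv a) d) (conjg e d)); auto.
    + intro E. exact (Hd (conjg_eq1 _ _ E)).
    + intro E. exact (Hd (conjg_eq1 _ _ E)).
    + rewrite !(hom_conjg _ _ hom_i1), (hom_inv hom_i1).
      apply (mul_cancel_l (i1 a)), (mul_cancel_r (i1 e)). unfold commute in C.
      unfold conjg. rewrite invgK. gsimpl. now rewrite <- !gmulA in C.
Qed.

Lemma centralizer_conj_letter1 c d y : d <> gone -> commute y (conjg c (i1 d)) ->
  exists f, y = conjg c (i1 f).
Proof.
  intros Hd C. rewrite <- (commute_conjg (ginv c)), conjgK in C.
  destruct (centralizer_letter1 d _ Hd C) as [f Ef]. exists f.
  rewrite <- Ef, <- (invgK c) at 1. now rewrite conjgK.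
Qed.

Definition alt_word (a : D1) (b : D2) n : list L := list_pow [inl a; inr b] n.

Section AlternatingWords.
Variables (a : D1) (b : D2).
Hypotheses (Ha : a <> gone) (Hb : b <> gone).

Lemma reduced_alt_word n : reduced (alt_word a b n).
Proof.
  induction n as [|n IH]; [exact I|].
  simpl. split; [exact Ha|]. split; [discriminate|]. split; [exact Hb|].
  split; [|exact IH]. destruct n; [exact I|discriminate].
Qed.

Lemma eval_alt_word n : eval (alt_word a b n) = gpow (gmul (i1 a) (i2 b)) n.
Proof. induction n as [|n IH]; [reflexivity|]. simpl. rewrite <- IH. now gsimpl. Qed.

Lemma length_alt_word n : length (alt_word a b n) = 2 * n.
Proof. induction n as [|n IH]; [reflexivity|]. unfold alt_word in *. simpl. rewrite IH. lia. Qed.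

Lemma first_side_alt_word n : first_side (alt_word a b (S n)) true.
Proof. now exists (inl a), (inr b :: alt_word a b n). Qed.

Lemma last_side_alt_word n : last_side (alt_word a b (S n)) false.
Proof.
  exists (alt_word a b n ++ [inl a]), (inr b). split; [|reflexivity].
  unfold alt_word. now rewrite list_pow_succ_r, <- app_assoc.
Qed.

Lemma nf_alt_pow n : nf (gpow (gmul (i1 a) (i2 b)) n) = alt_word a b n.
Proof. rewrite <- eval_alt_word. apply nf_eval, reduced_alt_word. Qed.

Lemma alt_pow_inj m n : gpow (gmul (i1 a) (i2 b)) m = gpow (gmul (i1 a) (i2 b)) n -> m = n.
Proof.
  intro E. apply (f_equal (fun g => length (nf g))) in E.
  rewrite !nf_alt_pow, !length_alt_word in E. lia.
Qed.

Lemma alt_pow_neq_letter n e : 1 <= n -> gpow (gmul (i1 a) (i2 b)) n <> i1 e.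
Proof.
  intros Hn E. pose proof (length_nf_eval [inl e]) as Len. simpl in Len.
  rewrite gmul1r, <- E, nf_alt_pow, length_alt_word in Len. lia.
Qed.
End AlternatingWords.

Lemma alt_pows_not_commute (a a' : D1) (b : D2) m n :
  a <> gone -> a' <> gone -> b <> gone -> a <> a' -> 1 <= m -> 1 <= n ->
  ~ commute (gpow (gmul (i1 a) (i2 b)) m) (gpow (gmul (i1 a') (i2 b)) n).
Proof.
  intros Ha Ha' Hb Hne Hm Hn C.
  destruct m as [|m]; [lia|]. destruct n as [|n]; [lia|].
  assert (R : forall (x x' : D1) p q, x <> gone -> x' <> gone ->
            reduced (alt_word x b (S p) ++ alt_word x' b (S q))).
  { intros x x' p q Hx Hx'. apply reduced_app_intro; auto using reduced_alt_word.
    eapply joinable_sides; [apply last_side_alt_word|apply first_side_alt_word|discriminate]. }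
  unfold commute in C. rewrite <- !eval_alt_word, <- !eval_app in C by assumption.
  apply eval_reduced_inj in C; auto. injection C. congruence.
Qed.

Lemma dihedral_elements (a : D1) (b : D2) :
  (forall x : D1, x = gone \/ x = a) -> (forall y : D2, y = gone \/ y = b) ->
  gmul a a = gone -> gmul b b = gone -> forall g,
  exists n, g = zpow (gmul (i1 a) (i2 b)) n \/ g = gmul (i1 a) (zpow (gmul (i1 a) (i2 b)) n).
Proof.
  intros Ea Eb Aa Bb g.
  assert (A1 : gmul (i1 a) (i1 a) = gone) by now rewrite <- hom_i1, Aa, (hom_one hom_i1).
  assert (B1 : gmul (i2 b) (i2 b) = gone) by now rewrite <- hom_i2, Bb, (hom_one hom_i2).
  destruct (fp_generated g) as [w ->].
  induction w as [|[x|y] w [n IH]]; simpl; [exists 0%Z; now left| |].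
  - destruct (Ea x) as [->| ->]; [rewrite (hom_one hom_i1), gmul1l; now exists n|].
    exists n. destruct IH as [-> | ->]; [now right|left]. now rewrite gmulA, A1, gmul1l.
  - destruct (Eb y) as [->| ->]; [rewrite (hom_one hom_i2), gmul1l; now exists n|].
    destruct IH as [-> | ->].
    + exists (1 + n)%Z. right. rewrite zpow_add, zpow1. gsimpl. now rewrite gmulA, A1, gmul1l.
    + exists (-1 + n)%Z. left. rewrite zpow_add, zpowN1, invMg.
      rewrite <- (mul_eq1_r _ _ A1), <- (mul_eq1_r _ _ B1). now gsimpl.
Qed.
End FreeProduct.

Lemma fp_swap {D1 D2 G : group} {i1 : D1 -> G} {i2 : D2 -> G} :
  is_free_product D1 D2 G i1 i2 -> is_free_product D2 D1 G i2 i1.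
Proof.
  intros [h1 [h2 U]]. split; [exact h2|]. split; [exact h1|].
  intros H f2 f1 Hf2 Hf1. destruct (U H f1 f2 Hf1 Hf2) as [f [Hf [E1 [E2 Uf]]]].
  exists f. split; [exact Hf|]. split; [exact E2|]. split; [exact E1|].
  intros f' Hf' E2' E1'. now apply Uf.
Qed.

Definition power_cover {G : group} (A B : G -> Prop) : Prop :=
  (forall x y, A x -> B y -> commute x y) /\
  (forall g, exists k, 1 <= k /\ exists x y, A x /\ B y /\ gpow g k = gmul x y).

Lemma power_cover_sym {G : group} (A B : G -> Prop) : power_cover A B -> power_cover B A.
Proof.
  intros [Comm Pow]. split; [intros x y Bx Ay; now apply commute_sym, Comm|].
  intro g. destruct (Pow g) as [k [Hk [x [y [Ax [By E]]]]]].
  exists k. split; [exact Hk|]. exists y, x. repeat split; auto. rewrite E. now apply Comm.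
Qed.

Lemma presentable_power_cover (G : group) : presentable_by_product G ->
  exists A B : G -> Prop, power_cover A B /\ ~ finite_set A /\ ~ finite_set B.
Proof.
  intros [_ [G1 [G2 [phi [Hphi [Hfi [HA HB]]]]]]].
  exists (image (fun a : G1 => phi (a, gone))), (image (fun b : G2 => phi (gone, b))).
  split; [|auto]. split.
  - intros x y [a <-] [b <-]. unfold commute. rewrite <- !Hphi. simpl. now rewrite !gmul1l, !gmul1r.
  - intro g.
    destruct (finite_index_pow_mem (image phi) g (image_subgroup Hphi) Hfi) as [k [Hk [[a b] E]]].
    exists k. split; [exact Hk|]. exists (phi (a, gone)), (phi (gone, b)).
    split; [now exists a|]. split; [now exists b|].
    rewrite <- E, <- Hphi. simpl. now rewrite gmul1l, gmul1r.
Qed.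

Section PowerCoverOfFreeProduct.
Context {D1 D2 G : group} {i1 : D1 -> G} {i2 : D2 -> G}.
Hypothesis FP : is_free_product D1 D2 G i1 i2.
Variables A B : G -> Prop.
Hypothesis Cover : power_cover A B.

(* Centralizers of conjugated letters would push A, B and then the powers of a conjugate of
   [i1 a * i2 e] into a single conjugate of the first factor. *)
Lemma power_cover_conj_letter1 (a : D1) (e : D2) (c : G) (d : D1) (y : G) :
  a <> gone -> e <> gone -> B y -> y <> gone -> d <> gone -> ~ A (conjg c (i1 d)).
Proof.
  intros Ha He By Hy Hd Ad. destruct Cover as [Comm Pow].
  destruct (centralizer_conj_letter1 FP c d y Hd (commute_sym _ _ (Comm _ _ Ad By))) as [f ->].
  assert (Hf : f <> gone) by (intros ->; apply Hy; now rewrite (hom_one (hom_i1 FP)), conjg1).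
  destruct (Pow (conjg c (gmul (i1 a) (i2 e)))) as [k [Hk [x [z [Ax [Bz E]]]]]].
  destruct (centralizer_conj_letter1 FP c f x Hf (Comm _ _ Ax By)) as [fx ->].
  destruct (centralizer_conj_letter1 FP c d z Hd (commute_sym _ _ (Comm _ _ Ad Bz))) as [fz ->].
  apply (alt_pow_neq_letter FP a e Ha He k (gmul fx fz) Hk), (conjg_inj c).
  now rewrite <- gpow_conjg, E, (hom_i1 FP), conjgM.
Qed.

Lemma power_cover_factor_unique1 (b : D2) (a a' : D1) :
  (forall x y, A x -> A y -> commute x y) -> (forall x y, B x -> B y -> commute x y) ->
  b <> gone -> a <> gone -> a' <> gone -> a = a'.
Proof.
  intros AbA AbB Hb Ha Ha'. destruct (classic (a = a')) as [|Hne]; [assumption|exfalso].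
  destruct Cover as [Comm Pow].
  destruct (Pow (gmul (i1 a) (i2 b))) as [k [Hk [x [y [Ax [By E]]]]]].
  destruct (Pow (gmul (i1 a') (i2 b))) as [m [Hm [x' [y' [Ax' [By' E']]]]]].
  apply (alt_pows_not_commute FP a a' b k m Ha Ha' Hb Hne Hk Hm). rewrite E, E'.
  apply commuteMl; apply commuteM; auto. now apply commute_sym, Comm.
Qed.
End PowerCoverOfFreeProduct.

Lemma power_cover_abelian {D1 D2 G : group} {i1 : D1 -> G} {i2 : D2 -> G}
  (FP : is_free_product D1 D2 G i1 i2) (A B : G -> Prop) :
  nontrivial D1 -> nontrivial D2 -> power_cover A B ->
  (exists x, A x /\ x <> gone) -> (exists y, B y /\ y <> gone) ->
  forall y y', B y -> B y' -> commute y y'.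
Proof.
  intros [a Ha] [e He] Cover [x [Ax Hx]] [z [Bz Hz]].
  destruct (conj_letter_or_abelian_centralizer FP x Hx) as [c [[d [Hd ->]]|[[d [Hd ->]]|Ab]]].
  - destruct (power_cover_conj_letter1 FP A B Cover a e c d z Ha He Bz Hz Hd Ax).
  - destruct (power_cover_conj_letter1 (fp_swap FP) A B Cover e a c d z He Ha Bz Hz Hd Ax).
  - intros y y' By By'. apply Ab; apply commute_sym; now apply Cover.
Qed.

Theorem presentable_free_product_factors {D1 D2 G : group} {i1 : D1 -> G} {i2 : D2 -> G}
  (FP : is_free_product D1 D2 G i1 i2) :
  nontrivial D1 -> nontrivial D2 -> presentable_by_product G ->
  (forall a a' : D1, a <> gone -> a' <> gone -> a = a') /\
  (forall b b' : D2, b <> gone -> b' <> gone -> b = b').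
Proof.
  intros N1 N2 P. destruct (presentable_power_cover G P) as [A [B [Cover [IA IB]]]].
  apply finite_set_nontrivial in IA, IB.
  pose proof (power_cover_abelian FP A B N1 N2 Cover IA IB) as AbB.
  pose proof (power_cover_abelian FP B A N1 N2 (power_cover_sym A B Cover) IB IA) as AbA.
  destruct N1 as [a Ha], N2 as [e He]. split.
  - intros x x'. now apply (power_cover_factor_unique1 FP A B Cover e).
  - intros y y'. now apply (power_cover_factor_unique1 (fp_swap FP) A B Cover a).
Qed.

Lemma isomorphic_Z2_of_unique (D : group) : nontrivial D ->
  (forall a a' : D, a <> gone -> a' <> gone -> a = a') -> isomorphic D Z2.
Proof.
  intros [a Ha] U.
  assert (Aa : gmul a a = gone).
  { destruct (classic (gmul a a = gone)) as [|Ne]; [assumption|].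
    exfalso. apply Ha, (mul_cancel_l a). now rewrite gmul1r, (U _ _ Ne Ha). }
  assert (Ex : forall x : D, x = gone \/ x = a).
  { intro x. destruct (classic (x = gone)); [now left|right; now apply U]. }
  exists (fun x => if emi (x = gone) then false else true), (fun t : Z2 => if t then a else gone).
  split; [|split; [|split]].
  - intros x y. simpl. destruct (Ex x) as [-> | ->], (Ex y) as [-> | ->];
      rewrite ?gmul1l, ?gmul1r, ?Aa; case_emi; simpl; congruence.
  - intros [] []; simpl; now rewrite ?gmul1l, ?gmul1r, ?Aa.
  - intro x. case_emi; [congruence|]. symmetry. now apply U.
  - intros []; case_emi; congruence.
Qed.

Lemma isomorphic_Z2_elements (D : group) : isomorphic D Z2 ->
  exists a : D, a <> gone /\ gmul a a = gone /\ forall x, x = gone \/ x = a.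
Proof.
  intros [f [g [Hf [Hg [gf fg]]]]]. exists (g true). split; [|split].
  - intro E. rewrite <- (hom_one Hg) in E. apply (f_equal f) in E. now rewrite !fg in E.
  - rewrite <- Hg. exact (hom_one Hg).
  - intro x. rewrite <- (gf x). destruct (f x); [right|left]; auto. exact (hom_one Hg).
Qed.

Definition Zgroup : group.
Proof. refine (@Group Z Z.add 0%Z Z.opp _ _ _ _ _); intros; lia. Defined.

(* [(m, n) |-> u^(m+n)] maps [Z * Z] onto the subgroup generated by [u = i1 a * i2 b],
   which has index two. *)
Theorem free_product_Z2_presentable {D1 D2 G : group} {i1 : D1 -> G} {i2 : D2 -> G}
  (FP : is_free_product D1 D2 G i1 i2) :
  isomorphic D1 Z2 -> isomorphic D2 Z2 -> presentable_by_product G.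
Proof.
  intros I1 I2.
  destruct (isomorphic_Z2_elements D1 I1) as [a [Ha [Aa Ea]]].
  destruct (isomorphic_Z2_elements D2 I2) as [b [Hb [Bb Eb]]].
  set (u := gmul (i1 a) (i2 b)).
  assert (Inf : forall S : G -> Prop, (forall k, S (gpow u k)) -> ~ finite_set S).
  { intros S HS. exact (infinite_of_injective S (gpow u) (alt_pow_inj FP a b Ha Hb) HS). }
  split; [now apply Inf|].
  exists Zgroup, Zgroup, (fun p : Z * Z => zpow u (fst p + snd p)%Z).
  split; [|split; [|split]].
  - intros [m n] [m' n']. simpl. rewrite <- zpow_add. f_equal. lia.
  - exists [gone; i1 a]. intro x.
    destruct (dihedral_elements FP a b Ea Eb Aa Bb x) as [n [E|E]];
      [exists gone|exists (i1 a)]; exists (zpow u n); simpl; (split; [tauto|]).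
    all: split; [exists (n, 0%Z); simpl; now rewrite Z.add_0_r|now rewrite ?gmul1l].
  - apply Inf. intro k. exists (Z.of_nat k). simpl. rewrite Z.add_0_r. apply zpow_of_nat.
  - apply Inf. intro k. exists (Z.of_nat k). apply zpow_of_nat.
Qed.

Theorem corollary9p2 (D1 D2 G : group) (i1 : D1 -> G) (i2 : D2 -> G) :
  nontrivial D1 -> nontrivial D2 ->
  finitely_generated D1 -> finitely_generated D2 ->
  is_free_product D1 D2 G i1 i2 ->
  (presentable_by_product G <-> (isomorphic D1 Z2 /\ isomorphic D2 Z2)).
Proof.
  intros N1 N2 _ _ FP. split.
  - intro P. destruct (presentable_free_product_factors FP N1 N2 P) as [U1 U2].
    split; now apply isomorphic_Z2_of_unique.
  - intros [I1 I2]. exact (free_product_Z2_presentable FP I1 I2).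
Qed.
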